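(* Let $(X,\leqslant)$ be a finite poset, $U$ a finite set of users with security function $\lambda\colon U\to X$, and $T=(X,E)$ a derivation out-tree with root $r$. Let $\phi=\phi_E$ be the key allocation function determined by $T$. Then \[ \sum_{x\in X,\ x\neq r}|U(x)|\cdot|\phi(x)| \;=\; \sum_{e\in E}\omega(e). \]
   Context: A derivation out-tree for $(X,\leqslant)$ is a spanning out-tree $T=(X,E)$ (a rooted tree on vertex set $X$ with all arcs oriented away from the root) such that $xy\in E$ implies $y<x$; its root $r$ is then the maximum element of $X$. Define $\phi_E\colon X\to 2^X$ by $\phi_E(r)=\{r\}$ and, for $x\neq r$, $\phi_E(x)=\{z\in X:\exists y\in X \text{ with } yz\in E,\ x\geqslant z,\ x\not\geqslant y\}$. For $u\in U$ write $U(x)=\{u\in U:\lambda(u)=x\}$. For $y,z\in X$ with $z<y$, let $\gamma(yz)=\{x\in X: x\geqslant z,\ x\not\geqslant y\}$ and define the weight $\omega(yz)=\sum_{x\in\gamma(yz)}|U(x)|$. *)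

From mathcomp Require Import all_boot all_order.
Set Implicit Arguments. Unset Strict Implicit. Unset Printing Implicit Defensive.
Import Order.Theory.
Local Open Scope order_scope.

Section Defs.
Variables (d : Order.disp_t) (X : finPOrderType d).

(* A spanning out-tree on vertex set X with root r, arc set given by the
   relation E (E y z means the arc y -> z). *)
Definition is_out_tree (E : rel X) (r : X) : Prop :=
  [/\ forall y, ~~ E y r,
      forall z, z != r -> #|[set y | E y z]| = 1%N
    & forall x, connect E r x].

Definition is_derivation_out_tree (E : rel X) (r : X) : Prop :=
  is_out_tree E r /\ forall x y, E x y -> y < x.

Definition phi (E : rel X) (r : X) (x : X) : {set X} :=
  if x == r then [set r]
  else [set z | [exists y, E y z && (z <= x) && ~~ (y <= x)]].

Variables (U : finType) (lam : U -> X).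

Definition Uof (x : X) : {set U} := [set u | lam u == x].

Definition gamma (y z : X) : {set X} := [set x | (z <= x) && ~~ (y <= x)].

Definition omega (y z : X) : nat := (\sum_(x in gamma y z) #|Uof x|)%N.

End Defs.

From mathcomp Require Import all_boot all_order.
Set Implicit Arguments. Unset Strict Implicit. Unset Printing Implicit Defensive.
Import Order.Theory.
Local Open Scope order_scope.

(* Both sides count pairs (u, e) of a user u and an arc e = yz with
   lam u in gamma(yz).  For x != r, the map yz |-> z is a bijection from the
   arcs whose gamma contains x onto phi(x), since in an out-tree every
   non-root vertex has a unique in-arc; and no gamma contains the root r,
   which lies above every vertex of a derivation tree. *)

Lemma path_last_le (d : Order.disp_t) (X : porderType d) (E : rel X) :
  (forall x y, E x y -> y < x) -> forall p a, path E a p -> last a p <= a.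
Proof.
move=> E_lt; elim=> [|b p IHp] a //= /andP[Eab pathp].
exact: le_trans (IHp _ pathp) (ltW (E_lt _ _ Eab)).
Qed.

Section DerivationTree.
Variables (d : Order.disp_t) (X : finPOrderType d) (E : rel X) (r : X).

Lemma out_tree_in_arc_unique : is_out_tree E r ->
  forall y1 y2 z, E y1 z -> E y2 z -> y1 = y2.
Proof.
case=> r_no_in in_arc1 _ y1 y2 z Ey1z Ey2z.
have z_neq_r : z != r by apply: contraTneq Ey1z => ->; exact: r_no_in.
have /eqP/cards1P[w in_arc_z] := in_arc1 _ z_neq_r.
have : y1 \in [set y | E y z] by rewrite inE.
have : y2 \in [set y | E y z] by rewrite inE.
by rewrite in_arc_z !inE => /eqP -> /eqP ->.
Qed.

Lemma derivation_tree_le_root : is_derivation_out_tree E r -> forall x, x <= r.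
Proof.
case=> [[_ _ r_connect] E_lt] x.
by have /connectP[p pathp ->] := r_connect x; exact: path_last_le pathp.
Qed.

Definition crossing_arcs (x : X) : {set X * X} :=
  [set e | E e.1 e.2 && (x \in gamma e.1 e.2)].

Lemma phi_crossing_arcs x : x != r ->
  phi E r x = [set e.2 | e in crossing_arcs x].
Proof.
move=> x_neq_r; rewrite /phi (negbTE x_neq_r); apply/setP => z; rewrite inE.
apply/existsP/imsetP => [[y /andP[/andP[Eyz zx] yx]] | [[y z'] e_cross ->]].
  by exists (y, z); rewrite // inE /= Eyz inE zx.
by move: e_cross; rewrite !inE /= => /andP[Eyz /andP[zx yx]]; exists y; rewrite Eyz zx.
Qed.

Lemma card_phi : is_out_tree E r -> forall x, x != r ->
  #|phi E r x| = #|crossing_arcs x|.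
Proof.
move=> tree x x_neq_r; rewrite phi_crossing_arcs // card_in_imset //.
move=> [y1 z1] [y2 z2]; rewrite !inE /= => /andP[Ey1z1 _] /andP[Ey2z2 _] eq_z.
by rewrite -eq_z in Ey2z2 *; rewrite (out_tree_in_arc_unique tree Ey1z1 Ey2z2).
Qed.

Lemma crossing_arcs_root : is_derivation_out_tree E r -> crossing_arcs r = set0.
Proof.
move=> tree; apply/setP => e.
by rewrite !inE !(derivation_tree_le_root tree) !andbF.
Qed.

End DerivationTree.

Lemma sum_omega_double_count (d : Order.disp_t) (X : finPOrderType d)
    (U : finType) (lam : U -> X) (E : rel X) :
  (\sum_(e : X * X | E e.1 e.2) omega lam e.1 e.2)%N =
  (\sum_x #|Uof lam x| * #|crossing_arcs E x|)%N.
Proof.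
rewrite /omega (exchange_big_dep predT) //=; apply: eq_bigr => x _.
by rewrite sum_nat_cond_const mulnC.
Qed.

Theorem theorem2 (d : Order.disp_t) (X : finPOrderType d) (U : finType)
  (lam : U -> X) (E : rel X) (r : X) :
  is_derivation_out_tree E r ->
  (\sum_(x : X | x != r) #|Uof lam x| * #|phi E r x|)%N =
  (\sum_(e : X * X | E e.1 e.2) omega lam e.1 e.2)%N.
Proof.
move=> tree; rewrite sum_omega_double_count [RHS](bigD1 r) //=.
rewrite crossing_arcs_root // cards0 muln0 add0n.
by apply: eq_bigr => x x_neq_r; rewrite (card_phi tree.1).
Qed.
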